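(* Let $x$ be a non-negative random variable for which there exist constants $\alpha>0$ and $k>0$ such that $\log(\alpha)/k\ge1$ and $\Pr[x\le\epsilon]\le\alpha\epsilon^k$ for all $\epsilon>0$. Then \[ \mathbb E[\max(1,\log(1/x))]\le\frac{1+\log\alpha}{k}. \]
   Context: $\log$ denotes the natural logarithm. *)

From HB Require Import structures.
From mathcomp Require Import all_boot all_order all_algebra.
From mathcomp Require Import all_classical all_reals all_analysis.

(* Put Y := max(1, -ln X).  For every t >= 1, Y <= t + (Y - t)^+, and for
   r >= 0 the event (Y - t)^+ > r forces X <= exp(-(t + r)), which has
   probability at most alpha exp(-k t) exp(-k r).  Integrating this exponential
   tail gives E[(Y - t)^+] <= alpha exp(-k t) / k, and t = ln alpha / k turns
   t + alpha exp(-k t) / k into (1 + ln alpha) / k. *)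

From HB Require Import structures.
From mathcomp Require Import all_boot all_order all_algebra.
From mathcomp Require Import all_classical all_reals all_analysis.
From mathcomp Require Import measurable_realfun.
From mathcomp Require Import lra.
Import Order.TTheory GRing.Theory Num.Theory.
Local Open Scope classical_set_scope.
Local Open Scope ring_scope.

Lemma ln_div1r (R : realType) (x : R) : ln (1 / x) = - ln x.
Proof.
rewrite div1r; have [x_gt0|x_le0] := ltP 0 x; first by rewrite lnV ?posrE.
by rewrite !ln0 ?oppr0 // invr_le0.
Qed.

Lemma le_expR_neg_ln (R : realType) (x s : R) :
  0 <= x -> s < - ln x -> x <= expR (- s).
Proof.
rewrite le_eqVlt => /predU1P[<- _|x_gt0 s_lt]; first exact: ltW (expR_gt0 _).
by rewrite -(lnK x_gt0) ler_expR; lra.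
Qed.

Section measurable_fun_level_sets.
Context d (T : measurableType d) (R : realType) (f : T -> R).
Hypothesis mf : measurable_fun setT f.

Lemma measurable_fun_o_infty (s : R) : measurable [set w | s < f w].
Proof. by rewrite -preimage_itvoy -[X in measurable X]setTI; exact: mf. Qed.

Lemma measurable_fun_infty_c (s : R) : measurable [set w | f w <= s].
Proof. by rewrite -preimage_itvNyc -[X in measurable X]setTI; exact: mf. Qed.

End measurable_fun_level_sets.

Lemma expectation_le_exp_tail d (T : measurableType d) (R : realType)
    (P : probability T R) (Z : {RV P >-> R}) (c b : R) :
  (forall w, 0 <= Z w) -> 0 < b ->
  (forall r, 0 <= r -> (P [set w | (r < Z w)%R] <= (c * expR (- b * r))%:E)%E) ->
  ('E_P[Z] <= (c / b)%:E)%E.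
Proof.
move=> Z_ge0 b_gt0 tail.
have c_ge0 : 0 <= c.
  have := le_trans (measure_ge0 P [set w | 0 < Z w]) (tail 0 (lexx 0)).
  by rewrite mulr0 expR0 mulr1 lee_fin.
(* c * expR (- b * x) is c / b times the exponential density of rate b. *)
pose f x := ((c / b)%:E * (exponential_pdf b x)%:E)%E.
have f_ge0 x : (0 <= f x)%E.
  rewrite /f -EFinM lee_fin mulr_ge0 ?divr_ge0 ?(ltW b_gt0) //.
  exact: exponential_pdf_ge0 (ltW b_gt0) x.
have mf : measurable_fun setT f.
  by apply: emeasurable_funM => //; apply/measurable_EFinP;
     exact: measurable_exponential_pdf.
rewrite ge0_expectation_ccdf //.
apply: (@le_trans _ _ (\int[lebesgue_measure]_(x in `[0%R, +oo[) f x)%E).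
  apply: ge0_le_integral => //.
  - exact: measurable_funTS (ccdf_measurable Z).
  - exact: measurable_funTS.
  move=> x; rewrite /= in_itv /= andbT => x_ge0.
  rewrite /f exponential_pdfE // -EFinM mulrA divfK ?gt_eqF //.
  apply: le_trans (tail x x_ge0); rewrite /ccdf /distribution /pushforward /=.
  rewrite (_ : Z @^-1` `]x, +oo[ = [set w | x < Z w]) //.
  by apply/seteqP; split => w /=; rewrite in_itv /= andbT.
apply: (@le_trans _ _ (\int[lebesgue_measure]_x f x)%E).
  exact: ge0_subset_integral.
rewrite integralZl ?integral_exponential_pdf ?mule1 //.
exact: integrable_exponential_pdf.
Qed.

Section small_ball_probability.
Context {d : measure_display} {T : measurableType d} {R : realType}.
Context {P : probability T R} {X : {RV P >-> R}} {alpha k : R}.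
Hypothesis X_ge0 : forall w, 0 <= X w.
Hypothesis k_gt0 : 0 < k.
Hypothesis small_ball :
  forall eps : R, 0 < eps -> (P [set w | (X w <= eps)%R] <= (alpha * eps `^ k)%:E)%E.

Lemma measurable_max1_neg_ln : measurable_fun setT (fun w => Num.max 1 (- ln (X w))).
Proof.
apply: measurable_maxr => //; apply: measurable_funN => //.
exact: measurableT_comp.
Qed.

Lemma prob_max1_neg_ln_gt (s : R) : 1 <= s ->
  (P [set w | (s < Num.max 1 (- ln (X w)))%R] <= (alpha * expR (- k * s))%:E)%E.
Proof.
move=> s_ge1.
have sub : [set w | s < Num.max 1 (- ln (X w))] `<=` [set w | X w <= expR (- s)].
  move=> w /=; rewrite lt_max ltNge s_ge1 /=.
  exact: le_expR_neg_ln.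
rewrite mulNr (mulrC k) -mulNr expRM.
apply: le_trans _ (small_ball _ (expR_gt0 (- s))).
apply: le_measure sub; rewrite inE.
- exact/measurable_fun_o_infty/measurable_max1_neg_ln.
- exact: measurable_fun_infty_c.
Qed.

Lemma expectation_max1_neg_ln_le (t : R) : 1 <= t ->
  (\int[P]_w (Num.max 1 (- ln (X w)))%:E <= (t + alpha * expR (- k * t) / k)%:E)%E.
Proof.
move=> t_ge1.
pose Y w := Num.max 1 (- ln (X w)).
pose excess (y : R) := Num.max 0 (y - t).
have mZ : measurable_fun setT (excess \o Y).
  apply: measurableT_comp measurable_max1_neg_ln.
  by apply: measurable_maxr => //; exact: measurable_funB.
pose Z : {RV P >-> R} := mfun_Sub (mem_set mZ).
have Z_ge0 w : 0 <= Z w by rewrite /= /excess le_max lexx.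
have Y_le w : Y w <= t + Z w.
  have : Y w - t <= excess (Y w) by rewrite le_max lexx orbT.
  by rewrite /=; lra.
have tailZ r : 0 <= r ->
    (P [set w | (r < Z w)%R] <= (alpha * expR (- k * t) * expR (- k * r))%:E)%E.
  move=> r_ge0; rewrite -mulrA -expRD -mulrDr.
  have tr_ge1 : 1 <= t + r by lra.
  apply: le_trans _ (prob_max1_neg_ln_gt _ tr_ge1).
  apply: le_measure => //; rewrite ?inE.
  - exact: measurable_fun_o_infty.
  - exact/measurable_fun_o_infty/measurable_max1_neg_ln.
  by move=> w /=; rewrite /excess /Y lt_max ltNge r_ge0 /=; lra.
apply: (@le_trans _ _ (\int[P]_w (t%:E + (Z w)%:E))%E).
  apply: ge0_le_integral => //.
  - by move=> w _; rewrite lee_fin le_max ler01.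
  - exact/measurable_EFinP/measurable_max1_neg_ln.
  - by apply/measurable_EFinP/measurable_funD.
  - by move=> w _; rewrite -EFinD lee_fin; exact: Y_le.
rewrite ge0_integralD //; last 3 first.
- by move=> w _; rewrite lee_fin; lra.
- by move=> w _; rewrite lee_fin.
- exact/measurable_EFinP.
rewrite integral_cst // [X in (_ * X)%E]probability_setT mule1.
rewrite -expectation_def EFinD leeD2l //.
exact: expectation_le_exp_tail Z_ge0 k_gt0 tailZ.
Qed.

End small_ball_probability.

Theorem mainTheorem9 (d : measure_display) (T : measurableType d) (R : realType)
  (P : probability T R) (X : {RV P >-> R}) (alpha k : R) :
  (forall w, 0 <= X w) ->
  0 < alpha -> 0 < k -> 1 <= ln alpha / k ->
  (forall eps : R, (0 < eps)%R -> (P [set w | (X w <= eps)%R] <= (alpha * eps `^ k)%:E)%E) ->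
  (\int[P]_w (Num.max 1 (ln (1 / X w)))%:E <= ((1 + ln alpha) / k)%:E)%E.
Proof.
move=> X_ge0 alpha_gt0 k_gt0 t0_ge1 small_ball.
under eq_integral do rewrite ln_div1r.
apply: le_trans (expectation_max1_neg_ln_le X_ge0 k_gt0 small_ball _ t0_ge1) _.
have -> : alpha * expR (- k * (ln alpha / k)) = 1.
  by rewrite mulNr (mulrC k) divfK ?gt_eqF // expRN lnK ?posrE // divff ?gt_eqF.
by rewrite lee_fin -mulrDl addrC.
Qed.
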